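(* Let $\alpha,\beta,\gamma,\delta\in\mathbb{C}$ be parameters for which all gamma functions and hypergeometric functions below are well-defined, and let $f(z)=f(\alpha,\beta,\gamma,\delta;z)$ be defined for $z\in\mathbb{C}\setminus\{0\}$ by $$f(\alpha,\beta,\gamma,\delta;z)=\sum_{\nu=0}^{\infty}\frac{z^{-\nu}\Gamma(\alpha+\gamma+\nu)}{\nu!\,\Gamma(\beta+\nu)}\,E\left(\begin{matrix}\alpha+1,&\beta+\nu\\ \delta,&\beta+1+\nu\end{matrix};z\right).$$ Then for all $z\neq 0$, $$-z f'(z)+\beta f(z)=E(\alpha+1;\delta;z)\,E(\alpha+\gamma;\beta;-z).$$
   Context: For complex parameters $a_1,\dots,a_p$, $b_1,\dots,b_q$ with $p\le q$ and $z\in\mathbb{C}\setminus\{0\}$, the MacRobert $E$-function is $$E\left(\begin{matrix}a_1,\dots,a_p\\ b_1,\dots,b_q\end{matrix};z\right)=\frac{\prod_{j=1}^p\Gamma(a_j)}{\prod_{j=1}^q\Gamma(b_j)}\,{}_pF_q\left(\begin{matrix}a_1,\dots,a_p\\ b_1,\dots,b_q\end{matrix};-\frac1z\right),$$ where ${}_pF_q$ is the generalized hypergeometric function. In particular $E(a;b;z)=\frac{\Gamma(a)}{\Gamma(b)}M(a;b;-1/z)$ with $M={}_1F_1$ Kummer's function. *)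

From Stdlib Require Import Reals Arith Factorial List ClassicalEpsilon.
From Coquelicot Require Import Coquelicot.
Import ListNotations.
Open Scope C_scope.

Definition Cexp (z : C) : C :=
  RtoC (exp (Re z)) * (cos (Im z), sin (Im z)).

Definition Cpow_real (x : R) (z : C) : C := Cexp (z * RtoC (ln x)).

Fixpoint Cpown (z : C) (n : nat) : C :=
  match n with O => 1 | S m => z * Cpown z m end.

Fixpoint Cpoch (a : C) (n : nat) : C :=
  match n with O => 1 | S m => Cpoch a m * (a + RtoC (INR m)) end.

(* the limit of a complex sequence (arbitrary if it does not exist) *)
Definition Clim (u : nat -> C) : C :=
  epsilon (inhabits (RtoC 0)) (fun l => filterlim u eventually (locally l)).

(* the sum of a complex series (arbitrary if it does not converge) *)
Definition CSeries (u : nat -> C) : C :=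
  epsilon (inhabits (RtoC 0))
    (fun l => filterlim (fun N => sum_n u N) eventually (locally l)).

(* Euler's Gamma function via Gauss' product formula:
   Gamma(z) = lim_n n^z n! / (z (z+1) ... (z+n)),  z not in {0,-1,-2,...} *)
Definition CGamma (z : C) : C :=
  Clim (fun n => Cpow_real (INR n) z * RtoC (INR (fact n)) / Cpoch z (S n)).

Definition prodC (l : list C) : C := fold_right Cmult 1 l.

Definition hyp_term (a b : list C) (x : C) (n : nat) : C :=
  prodC (map (fun ai => Cpoch ai n) a) / prodC (map (fun bj => Cpoch bj n) b)
  * Cpown x n / RtoC (INR (fact n)).

Definition pFq (a b : list C) (x : C) : C := CSeries (hyp_term a b x).

Definition MacE (a b : list C) (z : C) : C :=
  prodC (map CGamma a) / prodC (map CGamma b) * pFq a b (- / z).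

(* z is not a pole of Gamma, i.e. z not in {0,-1,-2,...} *)
Definition not_npint (z : C) : Prop := forall n : nat, z <> - RtoC (INR n).

Definition fser (al be ga de z : C) : C :=
  CSeries (fun nu =>
    / Cpown z nu * CGamma (al + ga + RtoC (INR nu))
    / (RtoC (INR (fact nu)) * CGamma (be + RtoC (INR nu)))
    * MacE [al + 1; be + RtoC (INR nu)] [de; be + 1 + RtoC (INR nu)] z).

(* Expanding both E-functions, the [v]-th summand of [f] is a series in [1 / z] whose
   [n]-th coefficient carries the factor [1 / (beta + v + n)], so that
   [f(z) = sum_(v, n) c_(v,n) z^(-v-n)] with [c_(v,n) = K A_v B_n (-1)^n / (beta + v + n)],
   where [K] is a quotient of Gamma values and [A_v], [B_n] are the Kummer coefficients of
   [E(alpha + gamma; beta)] and [E(alpha + 1; delta)].  The operator [- z d/dz + beta]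
   multiplies [z^(-m)] by [beta + m], cancels that factor and leaves the product of the two
   Kummer series.  Termwise differentiation is justified because [|c_(v,n)|] is bounded by
   a product of coefficients of two entire power series.  The Gamma values are reduced with
   [Gamma (x + 1) = x Gamma (x)], which follows from the convergence of Gauss' product. *)

From Stdlib Require Import Reals List Lra Lia ClassicalEpsilon FunctionalExtensionality Factorial.
From Coquelicot Require Import Coquelicot.
Import ListNotations.

Open Scope R_scope.

Lemma exists_nat_gt (A : R) : exists n : nat, A < INR n.
Proof.
  destruct (Rle_dec 0 A) as [HA|HA].
  - destruct (nfloor_ex A HA) as [n Hn]. exists (S n). rewrite S_INR. lra.
  - exists 0%nat. simpl. lra.
Qed.

Lemma exp_le_compat (a b : R) : a <= b -> exp a <= exp b.
Proof. intros [H|H]; [left; now apply exp_increasing|subst; lra]. Qed.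

Lemma sin_bounds_01 (a : R) : 0 <= a <= 1 -> a - a ^ 3 <= sin a <= a /\ 0 <= sin a.
Proof.
  intros Ha. destruct (pre_sin_bound a 0 ltac:(lra) ltac:(lra)) as [H1 H2].
  unfold sin_approx, sin_term in H1, H2. simpl in H1, H2.
  field_simplify in H1. field_simplify in H2.
  assert (0 <= a ^ 3) by (apply pow_le; lra).
  assert (a ^ 5 <= a ^ 3).
  { replace (a ^ 5) with (a ^ 3 * (a * a)) by ring.
    rewrite <- (Rmult_1_r (a ^ 3)) at 2. apply Rmult_le_compat_l; nra. }
  pose proof PI2_3_2. pose proof (sin_ge_0 a ltac:(lra) ltac:(lra)).
  repeat split; lra.
Qed.

Lemma sin_near_0_nonneg (b : R) : 0 <= b <= 1 ->
  Rabs (sin b - b) <= b ^ 2 /\ Rabs (sin b) <= Rabs b.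
Proof.
  intros Hb. destruct (sin_bounds_01 b Hb) as [[H1 H2] H3].
  assert (b ^ 3 <= b ^ 2) by (simpl; nra).
  rewrite (Rabs_left1 (sin b - b)), (Rabs_pos_eq (sin b)), (Rabs_pos_eq b) by lra. lra.
Qed.

Lemma sin_near_0 (b : R) : Rabs b <= 1 ->
  Rabs (sin b - b) <= b ^ 2 /\ Rabs (sin b) <= Rabs b.
Proof.
  intros Hb. destruct (Rle_dec 0 b) as [Hp|Hn].
  - rewrite Rabs_pos_eq in Hb by lra. now apply sin_near_0_nonneg.
  - rewrite Rabs_left in Hb by lra.
    destruct (sin_near_0_nonneg (- b) ltac:(lra)) as [H1 H2].
    rewrite sin_neg, Rabs_Ropp, Rabs_Ropp in H2. rewrite sin_neg in H1.
    replace (- sin b - - b) with (- (sin b - b)) in H1 by ring.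
    replace ((- b) ^ 2) with (b ^ 2) in H1 by ring.
    rewrite Rabs_Ropp in H1. now split.
Qed.

Lemma one_sub_cos_near_0 (b : R) : Rabs b <= 1 -> 0 <= 1 - cos b <= b ^ 2 / 2.
Proof.
  intros Hb.
  replace (cos b) with (1 - 2 * sin (b / 2) * sin (b / 2))
    by (rewrite <- cos_2a_sin; f_equal; field).
  destruct (sin_near_0 (b / 2)) as [_ Hs].
  { rewrite Rabs_div, (Rabs_pos_eq 2) by lra. lra. }
  pose proof (Rmult_le_compat _ _ _ _ (Rabs_pos _) (Rabs_pos _) Hs Hs) as H.
  rewrite <- !Rabs_mult in H. rewrite !Rabs_pos_eq in H by nra.
  unfold Rsqr. assert (0 <= sin (b / 2) * sin (b / 2)) by nra.
  replace (b / 2 * (b / 2)) with (b ^ 2 / 4) in H by field. lra.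
Qed.

Lemma exp_near_0 (a : R) : Rabs a <= 1 / 2 ->
  Rabs (exp a - 1 - a) <= 2 * a ^ 2 /\ Rabs (exp a - 1) <= 2 * Rabs a.
Proof.
  intros Ha. apply Rabs_le_between in Ha.
  pose proof (exp_ineq1_le a). pose proof (exp_ineq1_le (- a)).
  assert (Hm : exp a * exp (- a) = 1) by (rewrite <- exp_plus, Rplus_opp_r; apply exp_0).
  pose proof (exp_pos a).
  (* [exp a * (1 - a) <= exp a * exp (- a) = 1] bounds [exp a] from above. *)
  assert (exp a * (1 - a) <= 1) by nra.
  assert (exp a - 1 - a <= 2 * a ^ 2) by (simpl; nra).
  split.
  - rewrite Rabs_pos_eq by lra. lra.
  - apply Rabs_le. destruct (Rle_dec 0 a).
    + rewrite Rabs_pos_eq by lra. simpl in *. split; nra.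
    + rewrite Rabs_left by lra. simpl in *. split; nra.
Qed.

Lemma ln_succ_sub_ln (x : R) : 1 <= x -> / (x + 1) <= ln (x + 1) - ln x <= / x.
Proof.
  intros Hx. assert (0 < / x) by (apply Rinv_0_lt_compat; lra).
  replace (ln (x + 1) - ln x) with (ln (1 + / x)).
  2:{ replace (x + 1) with (x * (1 + / x)) by (field; lra). rewrite ln_mult by lra. ring. }
  split.
  - rewrite <- (ln_exp (/ (x + 1))). apply ln_le; [apply exp_pos|].
    pose proof (exp_ineq1_le (- / (x + 1))).
    assert (exp (/ (x + 1)) * exp (- / (x + 1)) = 1)
      by (rewrite <- exp_plus, Rplus_opp_r; apply exp_0).
    replace (1 + - / (x + 1)) with (x / (x + 1)) in H0 by (field; lra).
    replace (1 + / x) with ((x + 1) / x) by (field; lra).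
    pose proof (exp_pos (/ (x + 1))).
    apply (Rmult_le_reg_r (x / (x + 1))); [apply Rdiv_lt_0_compat; lra|].
    replace ((x + 1) / x * (x / (x + 1))) with 1 by (field; lra). nra.
  - rewrite <- (ln_exp (/ x)) at 2. apply ln_le; [lra|apply exp_ineq1_le].
Qed.

Lemma INR_le_pow2 (m : nat) : INR m <= 2 ^ m.
Proof.
  induction m as [|m IH]; [simpl; lra|].
  rewrite S_INR. simpl. pose proof (pow_R1_Rle 2 m ltac:(lra)). lra.
Qed.

Lemma INR_sqr_le_pow2 (m : nat) : INR m ^ 2 <= 2 ^ (m + 1).
Proof.
  assert (H3 : forall k, (3 <= k)%nat -> INR k ^ 2 <= 2 ^ (k + 1)).
  { intros k Hk. induction Hk as [|k Hk IH]; [simpl; lra|].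
    rewrite S_INR. replace (S k + 1)%nat with (S (k + 1)) by lia. simpl pow.
    assert (3 <= INR k) by (replace 3 with (INR 3) by (simpl; lra); now apply le_INR).
    simpl in IH. nra. }
  destruct m as [|[|[|m]]]; try (simpl; lra). apply H3. lia.
Qed.

Lemma ex_series_inv_succ_sqr : ex_series (fun k => / (INR k + 1) ^ 2).
Proof.
  (* Telescoping majorant [1 / ((k + 1) (k + 2) / 2) = 2 (1 / (k + 1) - 1 / (k + 2))]. *)
  set (b := fun k => 2 * (/ (INR k + 1) - / (INR k + 2))).
  assert (Sb : forall N, sum_n b N = 2 * (1 - / (INR N + 2))).
  { induction N as [|N IH].
    - rewrite sum_O. unfold b. simpl. field.
    - rewrite sum_Sn, IH. unfold b. rewrite S_INR.
      change (2 * (1 - / (INR N + 2)) + 2 * (/ (INR N + 1 + 1) - / (INR N + 1 + 2))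
              = 2 * (1 - / (INR N + 1 + 2))).
      pose proof (pos_INR N). field. lra. }
  apply (ex_series_le (K := R_AbsRing) (V := R_CompleteNormedModule) _ b).
  - intro k. change norm with Rabs. pose proof (pos_INR k).
    rewrite Rabs_pos_eq by (apply Rlt_le, Rinv_0_lt_compat; nra). unfold b.
    replace (2 * (/ (INR k + 1) - / (INR k + 2))) with (/ ((INR k + 1) * (INR k + 2) / 2))
      by (field; lra).
    apply Rinv_le_contravar; nra.
  - assert (L0 : is_lim_seq (fun N => / (INR N + 2)) 0).
    { apply (is_lim_seq_inv _ p_infty); [|discriminate].
      eapply is_lim_seq_ext; [|exact (proj1 (is_lim_seq_incr_n INR 2 p_infty) is_lim_seq_INR)].
      intro N. simpl. rewrite plus_INR. reflexivity. }
    exists 2. unfold is_series. eapply filterlim_ext; [intro N; symmetry; apply Sb|].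
    pose proof (is_lim_seq_scal_l _ 2 _ (is_lim_seq_minus' _ _ 1 0 (is_lim_seq_const 1) L0)) as L.
    simpl in L. replace (2 * (1 - 0)) with 2 in L by ring. exact L.
Qed.

Lemma sum_n_le_Series (g : nat -> R) : (forall n, 0 <= g n) -> ex_series g ->
  forall k, sum_n g k <= Series g.
Proof.
  intros Hg Eg. apply is_lim_seq_incr_compare; [exact (Series_correct g Eg)|].
  intro n. rewrite sum_Sn. specialize (Hg (S n)). change plus with Rplus. lra.
Qed.

Lemma ex_series_ratio_le_half (u : nat -> R) (N : nat) : (forall n, 0 <= u n) ->
  (forall n, (N <= n)%nat -> u (S n) <= u n / 2) -> ex_series u.
Proof.
  intros H0 H. apply (ex_series_incr_n u N).
  assert (B : forall k, u (N + k)%nat <= u N * (1 / 2) ^ k).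
  { induction k as [|k IH]; [rewrite Nat.add_0_r; simpl; lra|].
    rewrite Nat.add_succ_r. eapply Rle_trans; [apply H; lia|]. simpl. lra. }
  apply (ex_series_le (K := R_AbsRing) (V := R_CompleteNormedModule) _ (fun k => u N * (1 / 2) ^ k)).
  - intro k. change norm with Rabs. rewrite Rabs_pos_eq by apply H0. apply B.
  - apply (ex_series_scal_l (K := R_AbsRing) (V := R_NormedModule) (u N)).
    exists (/ (1 - 1 / 2)). apply is_series_geom. rewrite Rabs_pos_eq; lra.
Qed.

Open Scope C_scope.

Lemma Rabs_Im_le_Cmod (c : C) : (Rabs (Im c) <= Cmod c)%R.
Proof.
  destruct c as [a b]. unfold Cmod; simpl. rewrite <- sqrt_Rsqr_abs.
  apply sqrt_le_1_alt. unfold Rsqr. nra.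
Qed.

Lemma Cmod_le_Rabs_Re_Im (c : C) : (Cmod c <= Rabs (Re c) + Rabs (Im c))%R.
Proof.
  destruct c as [a b]. unfold Cmod, Re, Im; simpl.
  pose proof (Rabs_pos a); pose proof (Rabs_pos b).
  rewrite <- (sqrt_square (Rabs a + Rabs b)) by lra. apply sqrt_le_1_alt.
  assert (a * a = Rabs a * Rabs a)%R by (rewrite <- Rabs_mult, Rabs_pos_eq; nra).
  assert (b * b = Rabs b * Rabs b)%R by (rewrite <- Rabs_mult, Rabs_pos_eq; nra).
  nra.
Qed.

Lemma Cmod_RtoC_nonneg (r : R) : (0 <= r)%R -> Cmod (RtoC r) = r.
Proof. intros H. rewrite Cmod_R. apply Rabs_pos_eq, H. Qed.

Lemma Cmod_add_RtoC_ge (q : C) (r : R) : (0 <= r)%R -> (r - Cmod q <= Cmod (q + RtoC r))%R.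
Proof.
  intros Hr. pose proof (Cmod_triangle (q + RtoC r) (- q)) as H.
  replace (q + RtoC r + - q) with (RtoC r) in H by ring.
  rewrite Cmod_opp, Cmod_RtoC_nonneg in H by exact Hr. lra.
Qed.

Lemma Cmod_add_RtoC_le (q : C) (r : R) : (0 <= r)%R -> (Cmod (q + RtoC r) <= Cmod q + r)%R.
Proof.
  intros Hr. eapply Rle_trans; [apply Cmod_triangle|]. rewrite Cmod_RtoC_nonneg by exact Hr. lra.
Qed.

Lemma RtoC_neq_0 (r : R) : r <> 0%R -> RtoC r <> 0.
Proof. intros H E. apply H. injection E. auto. Qed.

Lemma Cinv_0 : / RtoC 0 = 0.
Proof. unfold Cinv. simpl. apply injective_projections; simpl; unfold Rdiv; ring. Qed.

Lemma Cinv_1 : / RtoC 1 = 1.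
Proof. unfold Cinv. simpl. apply injective_projections; simpl; field. Qed.

(* With the junk value [/ 0 = 0], inversion is multiplicative without side conditions. *)
Lemma Cinv_mult (a b : C) : / (a * b) = / a * / b.
Proof.
  destruct (Ceq_dec a 0) as [->|Ha]; [rewrite Cmult_0_l, Cinv_0; ring|].
  destruct (Ceq_dec b 0) as [->|Hb]; [rewrite Cmult_0_r, Cinv_0; ring|].
  field. split; assumption.
Qed.

Lemma Cmod_Cinv (a : C) : Cmod (/ a) = (/ Cmod a)%R.
Proof.
  destruct (Ceq_dec a 0) as [->|Ha]; [now rewrite Cinv_0, Cmod_0, Rinv_0|].
  apply Cmod_inv, Ha.
Qed.

Lemma Cpown_add (u : C) (m n : nat) : Cpown u (m + n) = Cpown u m * Cpown u n.
Proof. induction m as [|m IH]; simpl; [ring|]. rewrite IH. ring. Qed.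

Lemma Cpown_mult (u v : C) (n : nat) : Cpown (u * v) n = Cpown u n * Cpown v n.
Proof. induction n as [|n IH]; simpl; [ring|]. rewrite IH. ring. Qed.

Lemma Cpown_inv (u : C) (n : nat) : Cpown (/ u) n = / Cpown u n.
Proof.
  induction n as [|n IH]; simpl; [now rewrite Cinv_1|].
  rewrite IH, Cinv_mult. reflexivity.
Qed.

Lemma Cpown_opp (u : C) (n : nat) : Cpown (- u) n = Cpown (- (1)) n * Cpown u n.
Proof. rewrite <- Cpown_mult. f_equal. ring. Qed.

Lemma Cmod_Cpown (u : C) (n : nat) : Cmod (Cpown u n) = (Cmod u ^ n)%R.
Proof. induction n as [|n IH]; simpl; [apply Cmod_1|]. rewrite Cmod_mult, IH. reflexivity. Qed.

Lemma Cmod_Cpown_le (u : C) (r : R) (n : nat) : (Cmod u <= r)%R -> (Cmod (Cpown u n) <= r ^ n)%R.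
Proof. intros H. rewrite Cmod_Cpown. apply pow_incr. split; [apply Cmod_ge_0|exact H]. Qed.

Lemma Cexp_add (a b : C) : Cexp (a + b) = Cexp a * Cexp b.
Proof.
  destruct a as [a1 a2], b as [b1 b2]. unfold Cexp. simpl.
  rewrite exp_plus, cos_plus, sin_plus. apply injective_projections; simpl; ring.
Qed.

Lemma Cexp_RtoC (r : R) : Cexp (RtoC r) = RtoC (exp r).
Proof. unfold Cexp. simpl. rewrite cos_0, sin_0. apply injective_projections; simpl; ring. Qed.

Lemma Cexp_near_0 (w : C) : (Cmod w <= 1 / 2)%R -> (Cmod (Cexp w - 1 - w) <= 8 * Cmod w ^ 2)%R.
Proof.
  intros Hw. destruct w as [a b].
  pose proof (re_le_Cmod (a, b)) as Ha. pose proof (Rabs_Im_le_Cmod (a, b)) as Hb.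
  simpl in Ha, Hb. set (m := Cmod (a, b)) in *.
  eapply Rle_trans; [apply Cmod_le_Rabs_Re_Im|].
  replace (Re (Cexp (a, b) - 1 - (a, b))) with ((exp a - 1 - a) - exp a * (1 - cos b))%R
    by (unfold Cexp; simpl; ring).
  replace (Im (Cexp (a, b) - 1 - (a, b))) with (exp a * (sin b - b) + (exp a - 1) * b)%R
    by (unfold Cexp; simpl; ring).
  destruct (exp_near_0 a ltac:(lra)) as [E1 E2].
  destruct (sin_near_0 b ltac:(lra)) as [S1 _].
  destruct (one_sub_cos_near_0 b ltac:(lra)) as [C1 C2].
  assert (Ea : (0 < exp a)%R) by apply exp_pos.
  assert (Ea2 : (exp a <= 2)%R) by (apply Rabs_le_between in E2; lra).
  assert (a ^ 2 <= m ^ 2)%R by (rewrite <- (pow2_abs a); apply pow_incr; split; [apply Rabs_pos|exact Ha]).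
  assert (b ^ 2 <= m ^ 2)%R by (rewrite <- (pow2_abs b); apply pow_incr; split; [apply Rabs_pos|exact Hb]).
  assert (Rabs a * Rabs b <= m ^ 2)%R by (simpl; apply Rmult_le_compat; try apply Rabs_pos; lra).
  eapply Rle_trans; [apply Rplus_le_compat; apply Rabs_triang|].
  rewrite Rabs_Ropp, !Rabs_mult, (Rabs_pos_eq (exp a)), (Rabs_pos_eq (1 - cos b)) by lra.
  assert (exp a * (1 - cos b) <= 2 * (b ^ 2 / 2))%R by (apply Rmult_le_compat; lra).
  assert (exp a * Rabs (sin b - b) <= 2 * b ^ 2)%R
    by (apply Rmult_le_compat; try lra; apply Rabs_pos).
  assert (Rabs (exp a - 1) * Rabs b <= 2 * Rabs a * Rabs b)%R
    by (apply Rmult_le_compat_r; [apply Rabs_pos|lra]).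
  lra.
Qed.

Lemma filterlim_C_intro (u : nat -> C) (l : C) :
  (forall eps : R, (0 < eps)%R -> exists N, forall n, (N <= n)%nat -> (Cmod (u n - l) < eps)%R) ->
  filterlim u eventually (locally l).
Proof.
  intros H. apply filterlim_locally. intros eps.
  destruct (H eps (cond_pos eps)) as [N HN]. exists N. intros n Hn.
  apply (norm_compat1 (K := C_AbsRing) (V := C_NormedModule)). now apply HN.
Qed.

Lemma filterlim_seq_shift {U : UniformSpace} (p : nat -> U) (M : nat) (l : U) :
  filterlim (fun k => p (M + k)%nat) eventually (locally l) -> filterlim p eventually (locally l).
Proof.
  intros H P HP. destruct (H P HP) as [K HK]. exists (M + K)%nat. intros n Hn.
  replace n with (M + (n - M))%nat by lia. apply HK. lia.
Qed.

Lemma filterlim_locally_C_AbsRing {T : Type} (F : (T -> Prop) -> Prop) (u : T -> C) (l : C) :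
  filterlim u F (@locally C_UniformSpace l) <->
  filterlim u F (@locally (AbsRing_UniformSpace C_AbsRing) l).
Proof. split; intros H P HP; apply H, locally_C, HP. Qed.

Lemma filterlim_Cmult (u v : nat -> C) (l m : C) :
  filterlim u eventually (locally l) -> filterlim v eventually (locally m) ->
  filterlim (fun n => u n * v n) eventually (locally (l * m)).
Proof.
  rewrite !filterlim_locally_C_AbsRing. intros Hu Hv.
  eapply filterlim_comp_2; [exact Hu|exact Hv|].
  apply (filterlim_scal (K := C_AbsRing) (V := AbsRing_NormedModule C_AbsRing)).
Qed.

Lemma Clim_unique (u : nat -> C) (l : C) : filterlim u eventually (locally l) -> Clim u = l.
Proof.
  intros H. apply (filterlim_locally_unique (F := eventually) u); [|exact H].
  unfold Clim. apply epsilon_spec. now exists l.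
Qed.

Lemma CSeries_unique (u : nat -> C) (l : C) : is_series u l -> CSeries u = l.
Proof.
  intros H. apply (filterlim_locally_unique (F := eventually) (fun N => sum_n u N)); [|exact H].
  unfold CSeries. apply epsilon_spec. now exists l.
Qed.

Lemma is_series_CSeries (u : nat -> C) : ex_series u -> is_series u (CSeries u).
Proof. intros [l H]. now rewrite (CSeries_unique u l H). Qed.

Lemma CSeries_ext (u v : nat -> C) : (forall n, u n = v n) -> CSeries u = CSeries v.
Proof. intros H. f_equal. now apply functional_extensionality. Qed.

Lemma CSeries_scal_l (c : C) (u : nat -> C) : ex_series u ->
  CSeries (fun n => c * u n) = c * CSeries u.
Proof.
  intros E. apply CSeries_unique.
  exact (is_series_scal (K := C_AbsRing) (V := C_NormedModule) c _ _ (is_series_CSeries u E)).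
Qed.

Lemma CSeries_lin (a b : C) (u v : nat -> C) : ex_series u -> ex_series v ->
  CSeries (fun n => a * u n + b * v n) = a * CSeries u + b * CSeries v.
Proof.
  intros Eu Ev. apply CSeries_unique.
  exact (is_series_plus _ _ _ _
    (is_series_scal (K := C_AbsRing) (V := C_NormedModule) a _ _ (is_series_CSeries u Eu))
    (is_series_scal (K := C_AbsRing) (V := C_NormedModule) b _ _ (is_series_CSeries v Ev))).
Qed.

Lemma ex_series_Cmod_le (u : nat -> C) (b : nat -> R) :
  (forall n, (Cmod (u n) <= b n)%R) -> ex_series b -> ex_series u.
Proof. intros H Eb. apply (ex_series_le (K := C_AbsRing) (V := C_CompleteNormedModule) u b H Eb). Qed.

Lemma Cmod_CSeries_le (u : nat -> C) (b : nat -> R) :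
  (forall n, (Cmod (u n) <= b n)%R) -> ex_series b -> (Cmod (CSeries u) <= Series b)%R.
Proof.
  intros Hb Eb. pose proof (is_series_CSeries u (ex_series_Cmod_le u b Hb Eb)) as Hu.
  assert (L : is_lim_seq (fun N => Cmod (sum_n u N)) (Cmod (CSeries u))).
  { apply (filterlim_comp _ _ _ (fun N => sum_n u N) norm eventually (locally (CSeries u)));
      [exact Hu|exact (filterlim_norm (K := C_AbsRing) (V := C_NormedModule) (CSeries u))]. }
  refine (is_lim_seq_le _ _ _ _ _ L (Series_correct b Eb : is_lim_seq (sum_n b) (Series b))).
  intro N. exact (Rle_trans _ _ _ (norm_sum_n_m u 0 N) (sum_n_m_le _ _ 0 N Hb)).
Qed.

Lemma sum_n_telescope (q : nat -> C) (k : nat) :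
  sum_n (fun i => q (S i) - q i) k = q (S k) - q O.
Proof.
  induction k as [|k IH]; [now rewrite sum_O|].
  rewrite sum_Sn, IH. change (q (S k) - q O + (q (S (S k)) - q (S k)) = q (S (S k)) - q O). ring.
Qed.

(* The partial products stay bounded by [|p N| exp (sum |u|)], so their increments
   [p n u n] form an absolutely convergent series. *)
Lemma ex_lim_prod_one_plus (p u : nat -> C) (N : nat) :
  (forall n, (N <= n)%nat -> p (S n) = p n * (1 + u n)) ->
  ex_series (fun n => Cmod (u n)) ->
  exists l, filterlim p eventually (locally l).
Proof.
  intros Hp Hu.
  set (q := fun k => p (N + k)%nat). set (g := fun k => Cmod (u (N + k)%nat)).
  assert (Hq : forall k, q (S k) = q k * (1 + u (N + k)%nat)).
  { intro k. unfold q. rewrite Nat.add_succ_r. apply Hp. lia. }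
  assert (Hg0 : forall k, (0 <= g k)%R) by (intro; apply Cmod_ge_0).
  assert (Eg : ex_series g) by exact (proj1 (ex_series_incr_n (fun n => Cmod (u n)) N) Hu).
  assert (Hstep : forall k, (Cmod (1 + u (N + k)%nat) <= exp (g k))%R).
  { intro k. eapply Rle_trans; [apply Cmod_triangle|]. rewrite Cmod_1. apply exp_ineq1_le. }
  assert (Hgrowth : forall k, (Cmod (q (S k)) <= Cmod (q O) * exp (sum_n g k))%R).
  { induction k as [|k IH].
    - rewrite Hq, Cmod_mult, sum_O. apply Rmult_le_compat_l; [apply Cmod_ge_0|apply Hstep].
    - rewrite Hq, Cmod_mult, sum_Sn. change (plus (sum_n g k) (g (S k))) with (sum_n g k + g (S k))%R.
      rewrite exp_plus, <- Rmult_assoc.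
      apply Rmult_le_compat; auto using Cmod_ge_0. }
  set (B := (Cmod (q O) * exp (Series g))%R).
  assert (Hbound : forall k, (Cmod (q k) <= B)%R).
  { intros [|k]; unfold B.
    - rewrite <- (Rmult_1_r (Cmod (q O))) at 1. apply Rmult_le_compat_l; [apply Cmod_ge_0|].
      rewrite <- exp_0. apply exp_le_compat. eapply Rle_trans; [apply (Hg0 O)|].
      rewrite <- sum_O. apply sum_n_le_Series; assumption.
    - eapply Rle_trans; [apply Hgrowth|]. apply Rmult_le_compat_l; [apply Cmod_ge_0|].
      apply exp_le_compat, sum_n_le_Series; assumption. }
  destruct (ex_series_Cmod_le (fun k => q (S k) - q k) (fun k => B * g k)%R) as [l Hl].
  { intro k. rewrite Hq. replace (q k * (1 + u (N + k)%nat) - q k) with (q k * u (N + k)%nat) by ring.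
    rewrite Cmod_mult. apply Rmult_le_compat_r; [apply Hg0|apply Hbound]. }
  { now apply (ex_series_scal_l (K := R_AbsRing) (V := R_NormedModule)). }
  exists (q O + l). apply (filterlim_seq_shift _ (S N)).
  eapply filterlim_ext.
  { intro k. replace (S N + k)%nat with (N + S k)%nat by lia. change (p (N + S k)%nat) with (q (S k)).
    replace (q (S k)) with (q O + sum_n (fun i => q (S i) - q i) k) by (rewrite sum_n_telescope; ring).
    reflexivity. }
  eapply filterlim_comp_2; [apply filterlim_const|exact Hl|].
  apply (filterlim_plus (K := C_AbsRing) (V := C_NormedModule)).
Qed.

(** * Gauss' product for the Gamma function *)

Lemma not_npint_add_nat_neq_0 (x : C) (m : nat) : not_npint x -> x + RtoC (INR m) <> 0.
Proof.
  intros Hx H. apply (Hx m). replace x with ((x + RtoC (INR m)) - RtoC (INR m)) by ring.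
  rewrite H. ring.
Qed.

Lemma not_npint_neq_0 (x : C) : not_npint x -> x <> 0.
Proof.
  intros Hx. pose proof (not_npint_add_nat_neq_0 x 0 Hx) as H.
  simpl in H. now rewrite Cplus_0_r in H.
Qed.

Lemma not_npint_add_nat (x : C) (n : nat) : not_npint x -> not_npint (x + RtoC (INR n)).
Proof.
  intros Hx m H. apply (Hx (m + n)%nat). rewrite plus_INR, RtoC_plus.
  replace x with ((x + RtoC (INR n)) - RtoC (INR n)) by ring. rewrite H. ring.
Qed.

(* The finitely many [m] with [m < |q| + 1] are handled one by one, the others by
   [|q + m| >= m - |q| >= 1]. *)
Lemma Cmod_add_nat_lb (q : C) : not_npint q ->
  exists d, (0 < d)%R /\ forall m, (d <= Cmod (q + RtoC (INR m)))%R.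
Proof.
  intros Hq.
  assert (Hfin : forall N, exists d, (0 < d)%R /\
            forall m, (m < N)%nat -> (d <= Cmod (q + RtoC (INR m)))%R).
  { induction N as [|N [d [Hd HN]]]; [exists 1%R; split; [lra|intros m Hm; lia]|].
    pose proof (proj1 (Cmod_gt_0 _) (not_npint_add_nat_neq_0 q N Hq)).
    exists (Rmin d (Cmod (q + RtoC (INR N)))). split; [now apply Rmin_pos|].
    intros m Hm. destruct (Nat.eq_dec m N) as [->|Hne]; [apply Rmin_r|].
    eapply Rle_trans; [apply Rmin_l|]. apply HN. lia. }
  destruct (exists_nat_gt (Cmod q + 1)) as [N HN].
  destruct (Hfin N) as [d [Hd HdN]].
  exists (Rmin d 1). split; [apply Rmin_pos; lra|].
  intro m. destruct (Nat.lt_ge_cases m N) as [Hm|Hm].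
  - eapply Rle_trans; [apply Rmin_l|]. now apply HdN.
  - eapply Rle_trans; [apply Rmin_r|].
    pose proof (le_INR _ _ Hm). pose proof (Cmod_add_RtoC_ge q (INR m) (pos_INR m)). lra.
Qed.

Lemma Cmod_add_succ_ge_half (x : C) (n : nat) : (2 * Cmod x <= INR n)%R ->
  (INR n / 2 <= Cmod (x + RtoC (INR (S n))))%R.
Proof.
  intros Hn. pose proof (Cmod_add_RtoC_ge x (INR (S n)) (pos_INR _)).
  rewrite S_INR in *. lra.
Qed.

Lemma Cpoch_neq_0 (x : C) (n : nat) : not_npint x -> Cpoch x n <> 0.
Proof.
  intros Hx. induction n as [|n IH]; simpl.
  - apply RtoC_neq_0. lra.
  - apply Cmult_neq_0; [exact IH|now apply not_npint_add_nat_neq_0].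
Qed.

Lemma Cpoch_shift (x : C) (m : nat) : Cpoch x m * (x + RtoC (INR m)) = x * Cpoch (x + 1) m.
Proof.
  induction m as [|m IH]; [simpl; ring|].
  change (Cpoch x (S m)) with (Cpoch x m * (x + RtoC (INR m))).
  change (Cpoch (x + 1) (S m)) with (Cpoch (x + 1) m * (x + 1 + RtoC (INR m))).
  rewrite IH, S_INR, RtoC_plus. ring.
Qed.

Lemma INR_fact_neq_0_C (n : nat) : RtoC (INR (fact n)) <> 0.
Proof. apply RtoC_neq_0, INR_fact_neq_0. Qed.

Lemma INR_succ_neq_0_C (n : nat) : RtoC (INR (S n)) <> 0.
Proof. apply RtoC_neq_0, not_0_INR. lia. Qed.

Definition gauss_seq (x : C) (n : nat) : C :=
  Cpow_real (INR n) x * RtoC (INR (fact n)) / Cpoch x (S n).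

Definition gauss_factor (x : C) (n : nat) : C :=
  Cexp (x * RtoC (ln (INR (S n)) - ln (INR n))) * RtoC (INR (S n)) / (x + RtoC (INR (S n))) - 1.

Lemma gauss_seq_succ (x : C) (n : nat) : not_npint x -> (1 <= n)%nat ->
  gauss_seq x (S n) = gauss_seq x n * (1 + gauss_factor x n).
Proof.
  intros Hx Hn. unfold gauss_seq, gauss_factor, Cpow_real.
  replace (ln (INR (S n))) with (ln (INR n) + (ln (INR (S n)) - ln (INR n)))%R at 1 by ring.
  rewrite RtoC_plus, Cmult_plus_distr_l, Cexp_add.
  change (Cpoch x (S (S n))) with (Cpoch x (S n) * (x + RtoC (INR (S n)))).
  change (fact (S n)) with (S n * fact n)%nat. rewrite mult_INR, RtoC_mult.
  pose proof (Cpoch_neq_0 x (S n) Hx). pose proof (not_npint_add_nat_neq_0 x (S n) Hx).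
  field. split; assumption.
Qed.

(* With [L = ln (n + 1) - ln n] and [w = x L]: [1 / (n + 1) <= L <= 1 / n] makes both
   [(n + 1) (e^w - 1 - w)] and [(n + 1) L - 1] of order [1 / n]. *)
Lemma gauss_factor_eq (x : C) (n : nat) : x + RtoC (INR (S n)) <> 0 ->
  let L := (ln (INR (S n)) - ln (INR n))%R in
  gauss_factor x n = (RtoC (INR (S n)) * (Cexp (x * RtoC L) - 1 - x * RtoC L)
                      + x * RtoC (INR (S n) * L - 1)) / (x + RtoC (INR (S n))).
Proof.
  intros HD L. unfold gauss_factor. fold L.
  replace (RtoC (INR (S n) * L - 1)) with (RtoC (INR (S n)) * RtoC L - 1)
    by (unfold RtoC; apply injective_projections; simpl; ring).
  field. exact HD.
Qed.

Lemma ln_succ_sub_ln_INR (n : nat) : (1 <= n)%nat ->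
  let L := (ln (INR (S n)) - ln (INR n))%R in
  (0 <= L <= / INR n)%R /\ (0 <= INR (S n) * L - 1 <= / INR n)%R.
Proof.
  intros Hn L. assert (Hnn : (1 <= INR n)%R) by (apply (le_INR 1); exact Hn).
  destruct (ln_succ_sub_ln (INR n) Hnn) as [L1 L2]. rewrite <- S_INR in L1, L2. fold L in L1, L2.
  assert (0 < / INR (S n))%R by (apply Rinv_0_lt_compat; rewrite S_INR; lra).
  assert (0 <= L)%R by lra.
  apply (Rmult_le_compat_l (INR (S n))) in L1; [|rewrite S_INR; lra].
  rewrite Rinv_r in L1 by (rewrite S_INR; lra).
  assert (INR (S n) * / INR n = 1 + / INR n)%R by (rewrite S_INR; field; lra).
  assert (INR (S n) * L <= INR (S n) * / INR n)%R
    by (apply Rmult_le_compat_l; [rewrite S_INR|]; lra).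
  repeat split; lra.
Qed.

Lemma Cmod_gauss_factor_le (x : C) (n : nat) : (1 <= n)%nat -> (2 * Cmod x + 1 <= INR n)%R ->
  (Cmod (gauss_factor x n) <= (32 * Cmod x ^ 2 + 2 * Cmod x) * (/ INR n) ^ 2)%R.
Proof.
  intros Hn1 Hn2.
  destruct (ln_succ_sub_ln_INR n Hn1) as [[HL0 L2] HL1].
  set (L := (ln (INR (S n)) - ln (INR n))%R) in *.
  set (nn := INR n) in *. set (X := Cmod x) in *. set (iv := (/ nn)%R) in *.
  assert (Hnn : (1 <= nn)%R) by (apply (le_INR 1); exact Hn1).
  assert (HX : (0 <= X)%R) by apply Cmod_ge_0.
  assert (Hiv : (nn * iv = 1)%R) by (unfold iv; field; lra).
  assert (Hiv0 : (0 < iv <= 1)%R) by (split; [apply Rinv_0_lt_compat|]; nra).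
  assert (HSn : INR (S n) = (nn + 1)%R) by apply S_INR.
  set (w := x * RtoC L).
  assert (Hw : (Cmod w <= X * iv)%R).
  { unfold w. rewrite Cmod_mult, Cmod_RtoC_nonneg by lra. apply Rmult_le_compat_l; lra. }
  assert (Hw2 : (Cmod w <= 1 / 2)%R).
  { eapply Rle_trans; [exact Hw|]. apply (Rmult_le_reg_r nn); [lra|].
    replace (X * iv * nn)%R with X by (rewrite Rmult_assoc, (Rmult_comm iv), Hiv; ring). lra. }
  pose proof (Cmod_add_succ_ge_half x n ltac:(fold X nn; lra)) as HD. fold nn in HD.
  assert (HD0 : x + RtoC (INR (S n)) <> 0) by (intro H0; rewrite H0, Cmod_0 in HD; lra).
  rewrite (gauss_factor_eq x n HD0). fold L w. unfold Cdiv.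
  rewrite Cmod_mult, Cmod_inv by exact HD0.
  assert (HDi : (/ Cmod (x + RtoC (INR (S n))) <= 2 * iv)%R).
  { replace (2 * iv)%R with (/ (nn / 2))%R by (unfold iv; field; lra).
    apply Rinv_le_contravar; lra. }
  assert (HN : (Cmod (RtoC (INR (S n)) * (Cexp w - 1 - w) + x * RtoC (INR (S n) * L - 1))
                 <= (16 * X ^ 2 + X) * iv)%R).
  { eapply Rle_trans; [apply Cmod_triangle|].
    rewrite !Cmod_mult, !Cmod_RtoC_nonneg by lra. fold X. rewrite HSn.
    pose proof (Cexp_near_0 w Hw2) as CB.
    assert (Cmod w ^ 2 <= (X * iv) ^ 2)%R by (apply pow_incr; split; [apply Cmod_ge_0|exact Hw]).
    assert ((nn + 1) * Cmod (Cexp w - 1 - w) <= (nn + 1) * (8 * (X * iv) ^ 2))%R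
      by (apply Rmult_le_compat_l; lra).
    replace ((nn + 1) * (8 * (X * iv) ^ 2))%R with (8 * X ^ 2 * iv * (nn * iv + iv))%R in H0 by ring.
    rewrite Hiv in H0.
    assert (8 * X ^ 2 * iv * (1 + iv) <= 16 * X ^ 2 * iv)%R by (assert (0 <= X ^ 2)%R by nra; nra).
    assert (X * (INR (S n) * L - 1) <= X * iv)%R by (apply Rmult_le_compat_l; lra).
    rewrite HSn in H2. lra. }
  replace ((32 * X ^ 2 + 2 * X) * iv ^ 2)%R with (((16 * X ^ 2 + X) * iv) * (2 * iv))%R by ring.
  apply Rmult_le_compat; auto using Cmod_ge_0.
  left. apply Rinv_0_lt_compat. lra.
Qed.

Lemma ex_series_Cmod_gauss_factor (x : C) : ex_series (fun n => Cmod (gauss_factor x n)).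
Proof.
  destruct (exists_nat_gt (2 * Cmod x + 1)) as [N HN].
  apply (ex_series_incr_n _ (S N)).
  set (Kx := (32 * Cmod x ^ 2 + 2 * Cmod x)%R).
  assert (HK : (0 <= Kx)%R) by (unfold Kx; pose proof (Cmod_ge_0 x); nra).
  apply (ex_series_le (K := R_AbsRing) (V := R_CompleteNormedModule) _
           (fun k => Kx * / (INR k + 1) ^ 2)%R).
  - intro k. change norm with Rabs. rewrite Rabs_pos_eq by apply Cmod_ge_0.
    pose proof (pos_INR k). pose proof (pos_INR N).
    assert (E : INR (S N + k) = (INR N + INR k + 1)%R) by (rewrite plus_INR, S_INR; ring).
    eapply Rle_trans; [apply Cmod_gauss_factor_le; [lia|rewrite E; lra]|]. fold Kx.
    apply Rmult_le_compat_l; [exact HK|].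
    rewrite pow_inv. apply Rinv_le_contravar; [nra|].
    apply pow_incr. rewrite E. lra.
  - apply (ex_series_scal_l (K := R_AbsRing) (V := R_NormedModule) Kx _ ex_series_inv_succ_sqr).
Qed.

Lemma ex_lim_gauss_seq (x : C) : not_npint x -> exists l, filterlim (gauss_seq x) eventually (locally l).
Proof.
  intros Hx. apply (ex_lim_prod_one_plus _ (gauss_factor x) 1).
  - intros n Hn. now apply gauss_seq_succ.
  - apply ex_series_Cmod_gauss_factor.
Qed.

Lemma gauss_seq_add_1 (x : C) (n : nat) : not_npint x -> (1 <= n)%nat ->
  gauss_seq (x + 1) n = gauss_seq x n * (x * RtoC (INR n) / (x + RtoC (INR (S n)))).
Proof.
  intros Hx Hn. unfold gauss_seq, Cpow_real.
  replace ((x + 1) * RtoC (ln (INR n))) with (x * RtoC (ln (INR n)) + RtoC (ln (INR n))) by ring.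
  rewrite Cexp_add, Cexp_RtoC, exp_ln by (apply (lt_INR 0); lia).
  pose proof (not_npint_neq_0 x Hx).
  pose proof (Cpoch_neq_0 x (S n) Hx). pose proof (not_npint_add_nat_neq_0 x (S n) Hx).
  replace (Cpoch (x + 1) (S n)) with (Cpoch x (S n) * (x + RtoC (INR (S n))) / x)
    by (rewrite Cpoch_shift; field; assumption).
  field. repeat split; assumption.
Qed.

Lemma filterlim_gauss_shift_factor (x : C) :
  filterlim (fun n => x * RtoC (INR n) / (x + RtoC (INR (S n)))) eventually (locally x).
Proof.
  apply filterlim_C_intro. intros eps Heps. set (X := Cmod x).
  assert (HX : (0 <= X)%R) by apply Cmod_ge_0.
  destruct (exists_nat_gt (2 * X + 2 * X * (X + 1) / eps)) as [N HN].
  exists N. intros n Hn. set (nn := INR n).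
  assert (Hnn : (INR N <= nn)%R) by (apply le_INR; exact Hn).
  assert (H2 : (0 <= 2 * X * (X + 1) / eps)%R)
    by (apply Rmult_le_pos; [nra|left; apply Rinv_0_lt_compat; lra]).
  pose proof (Cmod_add_succ_ge_half x n ltac:(fold X nn; lra)) as HD. fold nn in HD.
  set (D := x + RtoC (INR (S n))) in *.
  assert (HD0 : D <> 0) by (intro H0; rewrite H0, Cmod_0 in HD; lra).
  replace (x * RtoC nn / D - x) with (- (x * (x + 1)) / D)
    by (field_simplify_eq; [unfold D; rewrite S_INR, RtoC_plus; fold nn; ring|exact HD0]).
  unfold Cdiv. rewrite Cmod_mult, Cmod_inv, Cmod_opp, Cmod_mult by exact HD0. fold X.
  assert (Cmod (x + 1) <= X + 1)%R by (eapply Rle_trans; [apply Cmod_triangle|rewrite Cmod_1; fold X; lra]).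
  assert (Hi : (/ Cmod D <= 2 / nn)%R).
  { replace (2 / nn)%R with (/ (nn / 2))%R by (field; lra). apply Rinv_le_contravar; lra. }
  assert (2 * X * (X + 1) < eps * nn)%R.
  { assert (2 * X * (X + 1) / eps < nn)%R by lra.
    apply (Rmult_lt_compat_l eps) in H0; [|lra].
    replace (eps * (2 * X * (X + 1) / eps))%R with (2 * X * (X + 1))%R in H0 by (field; lra). lra. }
  pose proof (Cmod_ge_0 (x + 1)).
  assert (0 <= / Cmod D)%R by (left; apply Rinv_0_lt_compat; lra).
  apply Rle_lt_trans with (X * (X + 1) * (2 / nn))%R; [apply Rmult_le_compat; nra|].
  apply (Rmult_lt_reg_r nn); [lra|].
  replace (X * (X + 1) * (2 / nn) * nn)%R with (2 * X * (X + 1))%R by (field; lra). lra.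
Qed.

Lemma CGamma_add_1 (x : C) : not_npint x -> CGamma (x + 1) = x * CGamma x.
Proof.
  intros Hx. destruct (ex_lim_gauss_seq x Hx) as [l Hl].
  unfold CGamma. fold (gauss_seq (x + 1)) (gauss_seq x).
  rewrite (Clim_unique _ _ Hl). apply Clim_unique. rewrite Cmult_comm.
  apply filterlim_ext_loc with (fun n => gauss_seq x n * (x * RtoC (INR n) / (x + RtoC (INR (S n))))).
  { exists 1%nat. intros n Hn. symmetry. now apply gauss_seq_add_1. }
  apply filterlim_Cmult; [exact Hl|apply filterlim_gauss_shift_factor].
Qed.

Lemma CGamma_add_nat (x : C) (n : nat) : not_npint x ->
  CGamma (x + RtoC (INR n)) = CGamma x * Cpoch x n.
Proof.
  intros Hx. induction n as [|n IH]; [simpl; replace (x + RtoC 0) with x by ring; ring|].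
  replace (x + RtoC (INR (S n))) with ((x + RtoC (INR n)) + 1) by (rewrite S_INR, RtoC_plus; ring).
  rewrite CGamma_add_1 by now apply not_npint_add_nat. rewrite IH. simpl. ring.
Qed.

(** * Kummer coefficients *)

Definition kummer_coef (p q : C) (n : nat) : C := Cpoch p n / (Cpoch q n * RtoC (INR (fact n))).

Definition infinite_radius (a : nat -> R) : Prop :=
  forall s : R, (0 <= s)%R -> ex_series (fun n => a n * s ^ n)%R.

Lemma kummer_coef_succ (p q : C) (n : nat) : not_npint q ->
  kummer_coef p q (S n) = kummer_coef p q n * ((p + RtoC (INR n)) / ((q + RtoC (INR n)) * RtoC (INR (S n)))).
Proof.
  intros Hq. unfold kummer_coef.
  change (Cpoch p (S n)) with (Cpoch p n * (p + RtoC (INR n))).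
  change (Cpoch q (S n)) with (Cpoch q n * (q + RtoC (INR n))).
  change (fact (S n)) with (S n * fact n)%nat. rewrite mult_INR, RtoC_mult.
  pose proof (Cpoch_neq_0 q n Hq). pose proof (not_npint_add_nat_neq_0 q n Hq).
  pose proof (INR_fact_neq_0_C n). pose proof (INR_succ_neq_0_C n).
  field. repeat split; assumption.
Qed.

(* Ratio test: the ratio [(p + n) / ((q + n) (n + 1))] is eventually below [1 / (2 s)]. *)
Lemma infinite_radius_of_ratio (a : nat -> C) (p q : C) :
  (forall n, a (S n) = a n * ((p + RtoC (INR n)) / ((q + RtoC (INR n)) * RtoC (INR (S n))))) ->
  infinite_radius (fun n => Cmod (a n)).
Proof.
  intros Ha s Hs.
  destruct (exists_nat_gt (2 * Cmod q + 4 * s * (Cmod p + 1) + 1)) as [N HN].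
  apply (ex_series_ratio_le_half _ N).
  { intro n. apply Rmult_le_pos; [apply Cmod_ge_0|now apply pow_le]. }
  intros n Hn. rewrite Ha, Cmod_mult. simpl pow.
  pose proof (le_INR _ _ Hn). pose proof (pos_INR n). pose proof (Cmod_ge_0 p). pose proof (Cmod_ge_0 q).
  assert (0 <= 4 * s * (Cmod p + 1))%R by nra.
  set (nn := INR n) in *.
  set (r := (p + RtoC nn) / ((q + RtoC nn) * RtoC (INR (S n)))).
  assert (Hr : (s * Cmod r <= 1 / 2)%R).
  { unfold r, Cdiv. rewrite Cmod_mult, Cmod_Cinv, Cmod_mult, Cmod_RtoC_nonneg by apply pos_INR.
    rewrite S_INR. fold nn.
    pose proof (Cmod_add_RtoC_ge q nn ltac:(lra)). pose proof (Cmod_add_RtoC_le p nn ltac:(lra)).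
    assert (Hd : (nn * (nn + 1) / 2 <= Cmod (q + RtoC nn) * (nn + 1))%R) by nra.
    assert (HI : (/ (Cmod (q + RtoC nn) * (nn + 1)) <= 2 / (nn * (nn + 1)))%R).
    { replace (2 / (nn * (nn + 1)))%R with (/ (nn * (nn + 1) / 2))%R by (field; lra).
      apply Rinv_le_contravar; nra. }
    pose proof (Cmod_ge_0 (p + RtoC nn)).
    apply Rle_trans with (s * ((Cmod p + nn) * (2 / (nn * (nn + 1)))))%R.
    { apply Rmult_le_compat_l; [lra|]. apply Rmult_le_compat; try lra.
      left. apply Rinv_0_lt_compat. nra. }
    apply (Rmult_le_reg_r (nn * (nn + 1))); [nra|].
    replace (s * ((Cmod p + nn) * (2 / (nn * (nn + 1)))) * (nn * (nn + 1)))%R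
      with (s * (Cmod p + nn) * 2)%R by (field; lra).
    nra. }
  pose proof (Cmod_ge_0 (a n)). pose proof (pow_le s n Hs).
  replace (Cmod (a n) * Cmod r * (s * s ^ n))%R with ((Cmod (a n) * s ^ n) * (s * Cmod r))%R by ring.
  assert (0 <= Cmod (a n) * s ^ n)%R by nra. nra.
Qed.

Lemma infinite_radius_kummer_coef (p q : C) : not_npint q ->
  infinite_radius (fun n => Cmod (kummer_coef p q n)).
Proof. intros Hq. apply (infinite_radius_of_ratio _ p q). intro n. now apply kummer_coef_succ. Qed.

Lemma infinite_radius_scal (k : R) (a : nat -> R) :
  infinite_radius a -> infinite_radius (fun n => k * a n)%R.
Proof.
  intros Ha s Hs. eapply ex_series_ext; [intro n; symmetry; apply Rmult_assoc|].
  now apply (ex_series_scal_l (K := R_AbsRing) (V := R_NormedModule)), Ha.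
Qed.

Lemma hyp_term_1F1 (a b x : C) (n : nat) : hyp_term [a] [b] x n = kummer_coef a b n * Cpown x n.
Proof.
  unfold hyp_term, kummer_coef. cbn [map prodC fold_right]. unfold Cdiv.
  rewrite !Cinv_mult, Cinv_1. ring.
Qed.

Lemma ex_series_hyp_term_1F1 (a b x : C) : not_npint b -> ex_series (hyp_term [a] [b] x).
Proof.
  intros Hb. apply (ex_series_Cmod_le _ (fun n => Cmod (kummer_coef a b n) * Cmod x ^ n)%R).
  - intro n. rewrite hyp_term_1F1, Cmod_mult, Cmod_Cpown. lra.
  - apply infinite_radius_kummer_coef; [exact Hb|apply Cmod_ge_0].
Qed.

Lemma hyp_term_2F2 (a c d x : C) (n : nat) : not_npint c -> not_npint d ->
  hyp_term [a; c] [d; c + 1] x n = kummer_coef a d n * (c / (c + RtoC (INR n))) * Cpown x n.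
Proof.
  intros Hc Hd. pose proof (not_npint_neq_0 c Hc).
  pose proof (Cpoch_neq_0 c n Hc). pose proof (Cpoch_neq_0 d n Hd).
  pose proof (not_npint_add_nat_neq_0 c n Hc). pose proof (INR_fact_neq_0_C n).
  unfold hyp_term, kummer_coef. cbn [map prodC fold_right].
  replace (Cpoch (c + 1) n) with (Cpoch c n * (c + RtoC (INR n)) / c)
    by (rewrite Cpoch_shift; field; assumption).
  field. repeat split; assumption.
Qed.

Lemma ex_series_hyp_term_2F2 (a c d x : C) : not_npint c -> not_npint d ->
  ex_series (hyp_term [a; c] [d; c + 1] x).
Proof.
  intros Hc Hd. destruct (Cmod_add_nat_lb c Hc) as [m [Hm0 Hm]].
  apply (ex_series_Cmod_le _ (fun n => (Cmod c / m) * (Cmod (kummer_coef a d n) * Cmod x ^ n))%R).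
  - intro n. rewrite hyp_term_2F2 by assumption.
    rewrite !Cmod_mult, Cmod_Cpown. unfold Cdiv. rewrite Cmod_mult, Cmod_Cinv.
    pose proof (Cmod_ge_0 c). pose proof (Cmod_ge_0 (kummer_coef a d n)).
    pose proof (pow_le (Cmod x) n (Cmod_ge_0 x)).
    assert (/ Cmod (c + RtoC (INR n)) <= / m)%R by (apply Rinv_le_contravar; auto).
    unfold Rdiv.
    replace (Cmod (kummer_coef a d n) * (Cmod c * / Cmod (c + RtoC (INR n))) * Cmod x ^ n)%R
      with ((Cmod c * (Cmod (kummer_coef a d n) * Cmod x ^ n)) * / Cmod (c + RtoC (INR n)))%R by ring.
    replace (Cmod c * / m * (Cmod (kummer_coef a d n) * Cmod x ^ n))%R
      with ((Cmod c * (Cmod (kummer_coef a d n) * Cmod x ^ n)) * / m)%R by ring.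
    apply Rmult_le_compat_l; [|assumption]. apply Rmult_le_pos; [lra|]. apply Rmult_le_pos; lra.
  - apply (ex_series_scal_l (K := R_AbsRing) (V := R_NormedModule) (Cmod c / m)%R).
    apply infinite_radius_kummer_coef; [exact Hd|apply Cmod_ge_0].
Qed.

(** * Termwise differentiation of double series in [1 / z] *)

Lemma is_derive_of_quadratic_remainder (f : C -> C) (z d : C) (r K : R) : (0 < r)%R ->
  (forall h, (Cmod h < r)%R -> Cmod (f (z + h) - f z - h * d) <= (Cmod h ^ 2 * K)%R) ->
  is_derive f z d.
Proof.
  intros Hr H. split; [apply is_linear_scal_l|].
  intros x Hx.
  apply (is_filter_lim_locally_unique (K := C_AbsRing) (V := AbsRing_NormedModule C_AbsRing)) in Hx.
  subst x. intros eps.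
  assert (HK : (0 < Rabs K + 1)%R) by (pose proof (Rabs_pos K); lra).
  set (delta := Rmin r (eps / (Rabs K + 1))).
  assert (Hdelta : (0 < delta)%R) by (apply Rmin_pos; [lra|apply Rdiv_lt_0_compat; [apply cond_pos|lra]]).
  exists (mkposreal delta Hdelta). intros y Hy.
  change (Cmod (y - z) < delta)%R in Hy.
  change (Cmod (f y - f z - (y - z) * d) <= eps * Cmod (y - z))%R.
  set (h := y - z) in *. replace y with (z + h) by (unfold h; ring).
  assert (Hh : (Cmod h * (Rabs K + 1) <= eps)%R).
  { apply (Rmult_le_reg_r (/ (Rabs K + 1))); [now apply Rinv_0_lt_compat|].
    rewrite Rmult_assoc, Rinv_r by lra. pose proof (Rmin_r r (eps / (Rabs K + 1))). fold delta in H0.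
    unfold Rdiv in H0. lra. }
  assert (Hr' : (Cmod h < r)%R) by (pose proof (Rmin_l r (eps / (Rabs K + 1))) as Hl; fold delta in Hl; lra).
  eapply Rle_trans; [apply H, Hr'|].
  pose proof (Rle_abs K). pose proof (Cmod_ge_0 h).
  assert (Cmod h ^ 2 * K <= Cmod h * (Cmod h * (Rabs K + 1)))%R by nra.
  nra.
Qed.

Lemma CSeries_remainder_le (u u0 u' : nat -> C) (h : C) (M : nat -> R) :
  ex_series u -> ex_series u0 -> ex_series u' -> ex_series M ->
  (forall k, (Cmod (u k - u0 k - h * u' k) <= Cmod h ^ 2 * M k)%R) ->
  (Cmod (CSeries u - CSeries u0 - h * CSeries u') <= Cmod h ^ 2 * Series M)%R.
Proof.
  intros Eu Eu0 Eu' EM HM.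
  replace (CSeries u - CSeries u0 - h * CSeries u')
    with (CSeries (fun k => u k - u0 k - h * u' k)).
  - rewrite <- Series_scal_l. apply Cmod_CSeries_le; [exact HM|].
    now apply (ex_series_scal_l (K := R_AbsRing) (V := R_NormedModule)).
  - apply CSeries_unique.
    pose proof (is_series_scal (K := C_AbsRing) (V := C_NormedModule) (- (1)) _ _ (is_series_CSeries u0 Eu0)) as S0.
    pose proof (is_series_scal (K := C_AbsRing) (V := C_NormedModule) (- h) _ _ (is_series_CSeries u' Eu')) as S'.
    pose proof (is_series_plus _ _ _ _ (is_series_plus _ _ _ _ (is_series_CSeries u Eu) S0) S') as S.
    replace (CSeries u - CSeries u0 - h * CSeries u')
      with (CSeries u + - (1) * CSeries u0 + - h * CSeries u') by ring.
    eapply is_series_ext; [|exact S]. intro k.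
    change (u k + - (1) * u0 k + - h * u' k = u k - u0 k - h * u' k). ring.
Qed.

Lemma Cmod_CSeries_scal_le (u : nat -> C) (k : R) (b : nat -> R) :
  (forall n, (Cmod (u n) <= k * b n)%R) -> ex_series b ->
  ex_series u /\ (Cmod (CSeries u) <= k * Series b)%R.
Proof.
  intros Hu Eb.
  assert (Ekb : ex_series (fun n => k * b n)%R)
    by now apply (ex_series_scal_l (K := R_AbsRing) (V := R_NormedModule)).
  split; [exact (ex_series_Cmod_le u _ Hu Ekb)|].
  rewrite <- Series_scal_l. now apply Cmod_CSeries_le.
Qed.

(* [u = 1 / (z + h)] and [v = 1 / z] satisfy [u - v = - h u v]; expanding
   [u^(m+1) - v^(m+1)] along this identity gives the inductive step. *)
Lemma Cpown_remainder_le (u v h : C) (rho : R) (m : nat) :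
  u - v + h * u * v = 0 -> (Cmod u <= rho)%R -> (Cmod v <= rho)%R ->
  (Cmod (Cpown u m - Cpown v m - h * (- RtoC (INR m) * Cpown v (S m)))
     <= Cmod h ^ 2 * (INR m ^ 2 * rho ^ (m + 2)))%R.
Proof.
  intros E Hu Hv.
  assert (Hr : (0 <= rho)%R) by (eapply Rle_trans; [apply Cmod_ge_0|exact Hu]).
  induction m as [|m IH].
  - simpl. replace (1 - 1 - h * (- RtoC 0 * (v * 1))) with (RtoC 0)
      by (apply injective_projections; simpl; ring).
    rewrite Cmod_0. simpl. pose proof (Cmod_ge_0 h). nra.
  - set (D := Cpown u m - Cpown v m - h * (- RtoC (INR m) * Cpown v (S m))) in *.
    replace (Cpown u (S m) - Cpown v (S m) - h * (- RtoC (INR (S m)) * Cpown v (S (S m))))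
      with (u * D + RtoC (INR (S m)) * (h * h) * u * Cpown v (S (S m))
            + (u - v + h * u * v) * (Cpown v m - RtoC (INR (S m)) * h * Cpown v (S m)))
      by (unfold D; simpl Cpown; rewrite S_INR, RtoC_plus; ring).
    rewrite E, Cmult_0_l, Cplus_0_r.
    eapply Rle_trans; [apply Cmod_triangle|].
    rewrite !Cmod_mult, Cmod_RtoC_nonneg by apply pos_INR.
    pose proof (Cmod_Cpown_le v rho (S (S m)) Hv).
    pose proof (Cmod_ge_0 h). pose proof (Cmod_ge_0 u). pose proof (Cmod_ge_0 D). pose proof (pos_INR m).
    pose proof (Cmod_ge_0 (Cpown v (S (S m)))).
    assert (X1 : (Cmod u * Cmod D <= rho * (Cmod h ^ 2 * (INR m ^ 2 * rho ^ (m + 2))))%R)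
      by (apply Rmult_le_compat; lra).
    assert (X2 : (INR (S m) * (Cmod h * Cmod h) * Cmod u * Cmod (Cpown v (S (S m)))
                  <= INR (S m) * (Cmod h * Cmod h) * rho * rho ^ (S (S m)))%R).
    { apply Rmult_le_compat; [| |apply Rmult_le_compat_l|]; try lra;
        repeat apply Rmult_le_pos; try apply pos_INR; lra. }
    rewrite S_INR in *.
    replace (rho * (Cmod h ^ 2 * (INR m ^ 2 * rho ^ (m + 2))))%R
      with (Cmod h ^ 2 * rho ^ (S m + 2) * INR m ^ 2)%R in X1 by (rewrite Nat.add_succ_l; simpl; ring).
    replace ((INR m + 1) * (Cmod h * Cmod h) * rho * rho ^ S (S m))%R
      with (Cmod h ^ 2 * rho ^ (S m + 2) * (INR m + 1))%R in X2
      by (rewrite Nat.add_succ_l, Nat.add_comm; simpl; ring).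
    assert (0 <= Cmod h ^ 2 * rho ^ (S m + 2))%R by (apply Rmult_le_pos; apply pow_le; lra).
    replace (Cmod h ^ 2 * ((INR m + 1) ^ 2 * rho ^ (S m + 2)))%R
      with (Cmod h ^ 2 * rho ^ (S m + 2) * (INR m ^ 2 + INR m + 1)
            + Cmod h ^ 2 * rho ^ (S m + 2) * INR m)%R by ring.
    nra.
Qed.

Lemma Cmod_inv_add_le (z h : C) : z <> 0 -> (Cmod h < Cmod z / 2)%R ->
  z + h <> 0 /\ (Cmod (/ (z + h)) <= 2 / Cmod z)%R.
Proof.
  intros Hz Hh. pose proof (proj1 (Cmod_gt_0 z) Hz).
  pose proof (Cmod_triangle (z + h) (- h)) as H'.
  replace (z + h + - h) with z in H' by ring. rewrite Cmod_opp in H'.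
  assert (Hzh : (Cmod z / 2 < Cmod (z + h))%R) by lra.
  assert (N : z + h <> 0) by (intro E; rewrite E, Cmod_0 in Hzh; lra).
  split; [exact N|]. rewrite Cmod_inv by exact N.
  replace (2 / Cmod z)%R with (/ (Cmod z / 2))%R by (field; lra).
  apply Rinv_le_contravar; lra.
Qed.

Definition inv_dterm (c : nat -> nat -> C) (v n : nat) (y : C) : C :=
  c v n * Cpown (/ y) (v + n).

Definition inv_dterm_deriv (c : nat -> nat -> C) (v n : nat) (y : C) : C :=
  c v n * (- RtoC (INR (v + n)) * Cpown (/ y) (S (v + n))).

Definition inv_dseries (c : nat -> nat -> C) (y : C) : C :=
  CSeries (fun v => CSeries (fun n => inv_dterm c v n y)).

Definition inv_dseries_deriv (c : nat -> nat -> C) (y : C) : C :=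
  CSeries (fun v => CSeries (fun n => inv_dterm_deriv c v n y)).

Section InvDoubleSeries.

Variables (c : nat -> nat -> C) (a b : nat -> R).
Hypotheses (Ha0 : forall v, (0 <= a v)%R) (Hb0 : forall n, (0 <= b n)%R).
Hypotheses (Ha : infinite_radius a) (Hb : infinite_radius b).
Hypothesis Hc : forall v n, (Cmod (c v n) <= a v * b n)%R.

Lemma Cmod_inv_dterm_le (y : C) (s : R) (v n : nat) : (Cmod (/ y) <= s)%R ->
  (Cmod (inv_dterm c v n y) <= (a v * s ^ v) * (b n * s ^ n))%R.
Proof.
  intros Hy. unfold inv_dterm. rewrite Cmod_mult.
  pose proof (Cmod_Cpown_le (/ y) s (v + n) Hy). rewrite pow_add in H.
  replace ((a v * s ^ v) * (b n * s ^ n))%R with ((a v * b n) * (s ^ v * s ^ n))%R by ring.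
  apply Rmult_le_compat; auto using Cmod_ge_0.
Qed.

(* The factor [v + n] is absorbed by [2 ^ (v + n)]. *)
Lemma Cmod_inv_dterm_deriv_le (z : C) (rho : R) (v n : nat) : (Cmod (/ z) <= rho)%R ->
  (Cmod (inv_dterm_deriv c v n z) <= rho * ((a v * (2 * rho) ^ v) * (b n * (2 * rho) ^ n)))%R.
Proof.
  intros Hz. unfold inv_dterm_deriv.
  rewrite !Cmod_mult, Cmod_opp, Cmod_RtoC_nonneg by apply pos_INR.
  pose proof (Cmod_Cpown_le (/ z) rho (S (v + n)) Hz).
  pose proof (pos_INR (v + n)). pose proof (INR_le_pow2 (v + n)).
  assert (INR (v + n) * Cmod (Cpown (/ z) (S (v + n))) <= 2 ^ (v + n) * rho ^ S (v + n))%R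
    by (apply Rmult_le_compat; auto using Cmod_ge_0).
  replace (rho * ((a v * (2 * rho) ^ v) * (b n * (2 * rho) ^ n)))%R
    with ((a v * b n) * (2 ^ (v + n) * rho ^ S (v + n)))%R
    by (rewrite !Rpow_mult_distr, <- tech_pow_Rmult, !pow_add; ring).
  apply Rmult_le_compat; auto using Cmod_ge_0. apply Rmult_le_pos; auto using Cmod_ge_0.
Qed.

Lemma inv_dterm_remainder_le (z h : C) (rho : R) (v n : nat) : z <> 0 -> z + h <> 0 ->
  (Cmod (/ (z + h)) <= rho)%R -> (Cmod (/ z) <= rho)%R ->
  Cmod (inv_dterm c v n (z + h) - inv_dterm c v n z - h * inv_dterm_deriv c v n z)
    <= (Cmod h ^ 2 * (2 * rho ^ 2 * ((a v * (2 * rho) ^ v) * (b n * (2 * rho) ^ n))))%R.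
Proof.
  intros Hz Hzh Hu Hw.
  assert (Hr : (0 <= rho)%R) by (eapply Rle_trans; [apply Cmod_ge_0|exact Hw]).
  replace (inv_dterm c v n (z + h) - inv_dterm c v n z - h * inv_dterm_deriv c v n z)
    with (c v n * (Cpown (/ (z + h)) (v + n) - Cpown (/ z) (v + n)
                   - h * (- RtoC (INR (v + n)) * Cpown (/ z) (S (v + n)))))
    by (unfold inv_dterm, inv_dterm_deriv; ring).
  rewrite Cmod_mult.
  assert (E : / (z + h) - / z + h * / (z + h) * / z = 0) by (field; split; assumption).
  pose proof (Cpown_remainder_le (/ (z + h)) (/ z) h rho (v + n) E Hu Hw) as PR.
  assert (Cmod h ^ 2 * (INR (v + n) ^ 2 * rho ^ (v + n + 2))
          <= Cmod h ^ 2 * (2 ^ (v + n + 1) * rho ^ (v + n + 2)))%R.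
  { apply Rmult_le_compat_l; [apply pow2_ge_0|].
    apply Rmult_le_compat_r; [now apply pow_le|apply INR_sqr_le_pow2]. }
  replace (Cmod h ^ 2 * (2 * rho ^ 2 * ((a v * (2 * rho) ^ v) * (b n * (2 * rho) ^ n))))%R
    with ((a v * b n) * (Cmod h ^ 2 * (2 ^ (v + n + 1) * rho ^ (v + n + 2))))%R
    by (rewrite !Rpow_mult_distr, !pow_add; simpl; ring).
  apply Rmult_le_compat; auto using Cmod_ge_0. lra.
Qed.

Lemma inv_dseries_inner_le (y : C) (s : R) (v : nat) : (Cmod (/ y) <= s)%R ->
  ex_series (fun n => inv_dterm c v n y) /\
  (Cmod (CSeries (fun n => inv_dterm c v n y)) <= (a v * s ^ v) * Series (fun n => b n * s ^ n))%R.
Proof.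
  intros Hy. apply Cmod_CSeries_scal_le; [intro n; now apply Cmod_inv_dterm_le|].
  apply Hb. eapply Rle_trans; [apply Cmod_ge_0|exact Hy].
Qed.

Lemma ex_series_inv_dseries_outer (y : C) (s : R) : (Cmod (/ y) <= s)%R ->
  ex_series (fun v => CSeries (fun n => inv_dterm c v n y)).
Proof.
  intros Hy. assert (Hs : (0 <= s)%R) by (eapply Rle_trans; [apply Cmod_ge_0|exact Hy]).
  apply (ex_series_Cmod_le _ (fun v => Series (fun n => b n * s ^ n) * (a v * s ^ v))%R).
  - intro v. rewrite Rmult_comm. apply (inv_dseries_inner_le y s v Hy).
  - apply (ex_series_scal_l (K := R_AbsRing) (V := R_NormedModule)). now apply Ha.
Qed.

Lemma inv_dseries_deriv_inner_le (z : C) (rho : R) (v : nat) : (Cmod (/ z) <= rho)%R ->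
  ex_series (fun n => inv_dterm_deriv c v n z) /\
  (Cmod (CSeries (fun n => inv_dterm_deriv c v n z))
     <= (rho * (a v * (2 * rho) ^ v)) * Series (fun n => b n * (2 * rho) ^ n))%R.
Proof.
  intros Hz. assert (Hr : (0 <= rho)%R) by (eapply Rle_trans; [apply Cmod_ge_0|exact Hz]).
  apply Cmod_CSeries_scal_le; [|apply Hb; lra].
  intro n. rewrite Rmult_assoc. now apply Cmod_inv_dterm_deriv_le.
Qed.

Lemma ex_series_inv_dseries_deriv_outer (z : C) (rho : R) : (Cmod (/ z) <= rho)%R ->
  ex_series (fun v => CSeries (fun n => inv_dterm_deriv c v n z)).
Proof.
  intros Hz. assert (Hr : (0 <= rho)%R) by (eapply Rle_trans; [apply Cmod_ge_0|exact Hz]).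
  apply (ex_series_Cmod_le _
           (fun v => (rho * Series (fun n => b n * (2 * rho) ^ n)) * (a v * (2 * rho) ^ v))%R).
  - intro v. eapply Rle_trans; [apply (inv_dseries_deriv_inner_le z rho v Hz)|]. right. ring.
  - apply (ex_series_scal_l (K := R_AbsRing) (V := R_NormedModule)). apply Ha. lra.
Qed.

Lemma inv_dseries_inner_remainder_le (z h : C) (rho : R) (v : nat) : z <> 0 -> z + h <> 0 ->
  (Cmod (/ (z + h)) <= rho)%R -> (Cmod (/ z) <= rho)%R ->
  Cmod (CSeries (fun n => inv_dterm c v n (z + h)) - CSeries (fun n => inv_dterm c v n z)
        - h * CSeries (fun n => inv_dterm_deriv c v n z))
    <= (Cmod h ^ 2 * ((2 * rho ^ 2 * Series (fun n => b n * (2 * rho) ^ n)) * (a v * (2 * rho) ^ v)))%R.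
Proof.
  intros Hz Hzh Hu Hw. assert (Hr : (0 <= rho)%R) by (eapply Rle_trans; [apply Cmod_ge_0|exact Hw]).
  replace ((2 * rho ^ 2 * Series (fun n => b n * (2 * rho) ^ n)) * (a v * (2 * rho) ^ v))%R
    with (Series (fun n => (2 * rho ^ 2 * (a v * (2 * rho) ^ v)) * (b n * (2 * rho) ^ n)))%R
    by (rewrite Series_scal_l; ring).
  apply CSeries_remainder_le.
  - apply (proj1 (inv_dseries_inner_le (z + h) (2 * rho) v ltac:(lra))).
  - apply (proj1 (inv_dseries_inner_le z (2 * rho) v ltac:(lra))).
  - apply (proj1 (inv_dseries_deriv_inner_le z rho v Hw)).
  - apply (ex_series_scal_l (K := R_AbsRing) (V := R_NormedModule)). apply Hb. lra.
  - intro n. rewrite Rmult_assoc. now apply inv_dterm_remainder_le.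
Qed.

(* For [|h| < |z| / 2] all of [1 / z] and [1 / (z + h)] lie in the disc of radius [2 / |z|],
   where the majorants give a remainder [O(|h|^2)] uniformly in the summation indices. *)
Theorem is_derive_inv_dseries (z : C) : z <> 0 ->
  is_derive (inv_dseries c) z (inv_dseries_deriv c z).
Proof.
  intros Hz. pose proof (proj1 (Cmod_gt_0 z) Hz).
  set (rho := (2 / Cmod z)%R). set (SB := Series (fun n => b n * (2 * rho) ^ n)%R).
  assert (Hrho : (0 < rho)%R) by (unfold rho; apply Rdiv_lt_0_compat; lra).
  assert (Hzi : (Cmod (/ z) <= rho)%R).
  { rewrite Cmod_inv by exact Hz. unfold rho, Rdiv.
    pose proof (Rinv_0_lt_compat _ H). lra. }
  apply (is_derive_of_quadratic_remainder _ z _ (Cmod z / 2)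
           (Series (fun v => (2 * rho ^ 2 * SB) * (a v * (2 * rho) ^ v))%R)); [lra|].
  intros h Hh. destruct (Cmod_inv_add_le z h Hz Hh) as [Hzh Hu]. fold rho in Hu.
  unfold inv_dseries, inv_dseries_deriv. apply CSeries_remainder_le.
  - apply (ex_series_inv_dseries_outer _ (2 * rho)). lra.
  - apply (ex_series_inv_dseries_outer _ (2 * rho)). lra.
  - now apply (ex_series_inv_dseries_deriv_outer _ rho).
  - apply (ex_series_scal_l (K := R_AbsRing) (V := R_NormedModule)). apply Ha. lra.
  - intro v. now apply inv_dseries_inner_remainder_le.
Qed.

End InvDoubleSeries.

Lemma inv_dseries_lin (c : nat -> nat -> C) (p q z : C) :
  (forall v, ex_series (fun n => inv_dterm_deriv c v n z)) ->
  (forall v, ex_series (fun n => inv_dterm c v n z)) ->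
  ex_series (fun v => CSeries (fun n => inv_dterm_deriv c v n z)) ->
  ex_series (fun v => CSeries (fun n => inv_dterm c v n z)) ->
  p * inv_dseries_deriv c z + q * inv_dseries c z
  = CSeries (fun v => CSeries (fun n => p * inv_dterm_deriv c v n z + q * inv_dterm c v n z)).
Proof.
  intros E'n En E'v Ev. unfold inv_dseries, inv_dseries_deriv.
  rewrite <- CSeries_lin by assumption.
  apply CSeries_ext. intro v. now rewrite CSeries_lin.
Qed.

Definition gamma_const (al be ga de : C) : C :=
  CGamma (al + ga) * CGamma (al + 1) / (CGamma be * CGamma de).

(* The coefficient of [z ^ (- v - n)] in [f]: the [v]-th summand contributes through
   [Gamma (beta + v) / Gamma (beta + 1 + v) * (beta + v)_n / (beta + 1 + v)_n = 1 / (beta + v + n)]. *)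
Definition fser_coef (al be ga de : C) (v n : nat) : C :=
  gamma_const al be ga de * kummer_coef (al + ga) be v * kummer_coef (al + 1) de n
  * Cpown (- (1)) n / (be + RtoC (INR (v + n))).

Lemma fser_summand_eq (al be ga de : C) (v : nat) (y : C) :
  not_npint (al + ga) -> not_npint be -> not_npint de ->
  / Cpown y v * CGamma (al + ga + RtoC (INR v)) / (RtoC (INR (fact v)) * CGamma (be + RtoC (INR v)))
    * MacE [al + 1; be + RtoC (INR v)] [de; be + 1 + RtoC (INR v)] y
  = CSeries (fun n => inv_dterm (fser_coef al be ga de) v n y).
Proof.
  intros Halga Hbe Hde.
  set (c := be + RtoC (INR v)).
  assert (Hc : not_npint c) by now apply not_npint_add_nat.
  replace (be + 1 + RtoC (INR v)) with (c + 1) by (unfold c; ring).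
  unfold MacE, pFq. cbn [map prodC fold_right].
  rewrite Cmult_assoc, <- CSeries_scal_l by now apply ex_series_hyp_term_2F2.
  apply CSeries_ext. intro n. rewrite hyp_term_2F2 by assumption.
  unfold inv_dterm, fser_coef, gamma_const, kummer_coef.
  rewrite (CGamma_add_nat (al + ga) v Halga). unfold c. rewrite (CGamma_add_nat be v Hbe).
  replace (be + RtoC (INR v) + 1) with (be + RtoC (INR (S v))) by (rewrite S_INR, RtoC_plus; ring).
  rewrite (CGamma_add_nat be (S v) Hbe).
  change (Cpoch be (S v)) with (Cpoch be v * (be + RtoC (INR v))).
  rewrite Cpown_add, Cpown_inv, Cpown_opp, plus_INR, RtoC_plus.
  pose proof (Cpoch_neq_0 be v Hbe). pose proof (not_npint_add_nat_neq_0 be v Hbe).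
  pose proof (not_npint_add_nat_neq_0 _ n Hc). pose proof (Cpoch_neq_0 de n Hde).
  pose proof (INR_fact_neq_0_C v). pose proof (INR_fact_neq_0_C n).
  assert (be + (RtoC (INR v) + RtoC (INR n)) <> 0) by (rewrite Cplus_assoc; assumption).
  unfold Cdiv. rewrite !Cinv_mult.
  set (igd := / CGamma de). set (iy := / Cpown y v). clearbody igd iy.
  (* [Gamma beta <> 0] is not available; for [Gamma beta = 0] both sides vanish. *)
  destruct (Ceq_dec (CGamma be) 0) as [HG|HG].
  - rewrite HG, Cinv_0. ring.
  - field. repeat split; assumption.
Qed.

Lemma fser_eq_inv_dseries (al be ga de : C) :
  not_npint (al + ga) -> not_npint be -> not_npint de ->
  fser al be ga de = inv_dseries (fser_coef al be ga de).
Proof.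
  intros Halga Hbe Hde. apply functional_extensionality. intro y.
  apply CSeries_ext. intro v. now apply fser_summand_eq.
Qed.

Lemma Cmod_fser_coef_le (al be ga de : C) : not_npint be ->
  exists K, (0 <= K)%R /\ forall v n, (Cmod (fser_coef al be ga de v n)
    <= (K * Cmod (kummer_coef (al + ga) be v)) * Cmod (kummer_coef (al + 1) de n))%R.
Proof.
  intros Hbe. destruct (Cmod_add_nat_lb be Hbe) as [d [Hd Hdm]].
  exists (Cmod (gamma_const al be ga de) / d)%R.
  split; [apply Rmult_le_pos; [apply Cmod_ge_0|left; now apply Rinv_0_lt_compat]|].
  intros v n. unfold fser_coef, Cdiv.
  rewrite !Cmod_mult, Cmod_Cpown, Cmod_opp, Cmod_1, pow1, Cmod_Cinv.
  assert (/ Cmod (be + RtoC (INR (v + n))) <= / d)%R by (apply Rinv_le_contravar; auto).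
  pose proof (Cmod_ge_0 (gamma_const al be ga de)).
  pose proof (Cmod_ge_0 (kummer_coef (al + ga) be v)). pose proof (Cmod_ge_0 (kummer_coef (al + 1) de n)).
  unfold Rdiv. rewrite Rmult_1_r.
  replace (Cmod (gamma_const al be ga de) * / d * Cmod (kummer_coef (al + ga) be v)
           * Cmod (kummer_coef (al + 1) de n))%R
    with (Cmod (gamma_const al be ga de) * Cmod (kummer_coef (al + ga) be v)
          * Cmod (kummer_coef (al + 1) de n) * / d)%R by ring.
  apply Rmult_le_compat_l; [repeat apply Rmult_le_pos|]; assumption.
Qed.

Lemma fser_coef_majorant (al be ga de : C) : not_npint be -> not_npint de ->
  exists a b : nat -> R, (forall v, 0 <= a v)%R /\ (forall n, 0 <= b n)%R /\
    infinite_radius a /\ infinite_radius b /\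
    forall v n, (Cmod (fser_coef al be ga de v n) <= a v * b n)%R.
Proof.
  intros Hbe Hde. destruct (Cmod_fser_coef_le al be ga de Hbe) as [K [HK Hc]].
  exists (fun v => K * Cmod (kummer_coef (al + ga) be v))%R, (fun n => Cmod (kummer_coef (al + 1) de n)).
  repeat split.
  - intro v. apply Rmult_le_pos; [exact HK|apply Cmod_ge_0].
  - intro n. apply Cmod_ge_0.
  - now apply infinite_radius_scal, infinite_radius_kummer_coef.
  - now apply infinite_radius_kummer_coef.
  - exact Hc.
Qed.

(* [(- z d/dz + beta) z^(-m) = (beta + m) z^(-m)] cancels the denominator of [fser_coef]. *)
Lemma euler_op_inv_dterm_fser_coef (al be ga de z : C) (v n : nat) : z <> 0 -> not_npint be ->
  - z * inv_dterm_deriv (fser_coef al be ga de) v n z + be * inv_dterm (fser_coef al be ga de) v n z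
  = (gamma_const al be ga de * (kummer_coef (al + ga) be v * Cpown (/ z) v))
    * hyp_term [al + 1] [de] (- / z) n.
Proof.
  intros Hz Hbe. rewrite hyp_term_1F1. unfold inv_dterm, inv_dterm_deriv, fser_coef.
  pose proof (not_npint_add_nat_neq_0 be (v + n) Hbe).
  rewrite (Cpown_opp (/ z)). change (Cpown (/ z) (S (v + n))) with (/ z * Cpown (/ z) (v + n)).
  rewrite Cpown_add. field. split; assumption.
Qed.

Lemma MacE_1F1 (a b z : C) : MacE [a] [b] z = CGamma a / CGamma b * pFq [a] [b] (- / z).
Proof. unfold MacE. cbn [map prodC fold_right]. now rewrite !Cmult_1_r. Qed.

Lemma euler_op_fser_dseries (al be ga de z : C) : z <> 0 -> not_npint be -> not_npint de ->
  CSeries (fun v => CSeries (fun n =>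
    - z * inv_dterm_deriv (fser_coef al be ga de) v n z + be * inv_dterm (fser_coef al be ga de) v n z))
  = MacE [al + 1] [de] z * MacE [al + ga] [be] (- z).
Proof.
  intros Hz Hbe Hde. set (F := pFq [al + 1] [de] (- / z)).
  rewrite (CSeries_ext _ (fun v => (gamma_const al be ga de * F) * hyp_term [al + ga] [be] (/ z) v)).
  2:{ intro v.
      rewrite (CSeries_ext _ _ (fun n => euler_op_inv_dterm_fser_coef al be ga de z v n Hz Hbe)).
      rewrite CSeries_scal_l, hyp_term_1F1 by now apply ex_series_hyp_term_1F1.
      change (CSeries (hyp_term [al + 1] [de] (- / z))) with F. ring. }
  rewrite CSeries_scal_l by now apply ex_series_hyp_term_1F1.
  rewrite !MacE_1F1. replace (- / - z) with (/ z) by (field; exact Hz).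
  fold F. unfold pFq, gamma_const, Cdiv. rewrite !Cinv_mult. ring.
Qed.

Theorem mainTheorem1 (al be ga de : C)
  (Hal : not_npint (al + 1)) (Halga : not_npint (al + ga))
  (Hbe : not_npint be) (Hde : not_npint de)
  (z : C) (Hz : z <> 0) :
  exists d : C,
    is_derive (fser al be ga de) z d /\
    - z * d + be * fser al be ga de z
      = MacE [al + 1] [de] z * MacE [al + ga] [be] (- z).
Proof.
  rewrite (fser_eq_inv_dseries al be ga de Halga Hbe Hde).
  set (c := fser_coef al be ga de).
  destruct (fser_coef_majorant al be ga de Hbe Hde) as (a & b & Ha0 & Hb0 & Ha & Hb & Hc).
  assert (Hs : (Cmod (/ z) <= Cmod (/ z))%R) by apply Rle_refl.
  exists (inv_dseries_deriv c z). split; [now apply (is_derive_inv_dseries c a b)|].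
  rewrite inv_dseries_lin; [now apply euler_op_fser_dseries| | | |].
  - intro v. eapply proj1, (inv_dseries_deriv_inner_le c a b); eauto.
  - intro v. eapply proj1, (inv_dseries_inner_le c a b); eauto.
  - eapply (ex_series_inv_dseries_deriv_outer c a b); eauto.
  - eapply (ex_series_inv_dseries_outer c a b); eauto.
Qed.
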